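(* Let $B$ and $T$ be disjoint finite sets with a bijection $b\mapsto \bar b$ from $B$ to $T$, let $A$ be a $B\times T$ matrix over $GF(2)$ with $A_{b,\bar b}=0$ for all $b\in B$, and let $E=(I\mid A)$ be the $B\times(B\cup T)$ matrix whose $B$-columns form the identity and whose $T$-columns form $A$. Let $M$ be the column matroid of $E$ and $\Omega=\{\{b,\bar b\}: b\in B\}$. Then $(M,\Omega)$ is a $2$-sheltering matroid if and only if $A$ is symmetric, i.e. $A_{b,\bar c}=A_{c,\bar b}$ for all $b,c\in B$.
   Context: A sheltering matroid is a pair $(M,\Omega)$ where $M$ is a matroid on a finite set $U$ and $\Omega$ a partition of $U$ such that for every independent set $I$ of $M$ meeting each class of $\Omega$ in at most one element, and every $2$-element subset $\{x,y\}$ of a class $\omega$ with $\omega\cap I=\emptyset$, $I\cup\{x\}$ or $I\cup\{y\}$ is independent in $M$. It is a $2$-sheltering matroid if all classes have size $2$. *)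

From HB Require Import structures.
From mathcomp Require Import all_boot all_order all_algebra.
Set Implicit Arguments. Unset Strict Implicit. Unset Printing Implicit Defensive.
Import GRing.Theory.
Local Open Scope ring_scope.

Definition col_indep (R U : finType) (E : R -> U -> 'F_2) (I : {set U}) : Prop :=
  forall c : U -> 'F_2,
    (forall x, x \notin I -> c x = 0) ->
    (forall r, \sum_(x in I) c x * E r x = 0) ->
    forall x, c x = 0.

Definition sheltering (U : finType) (indep : {set U} -> Prop)
    (Omega : {set {set U}}) : Prop :=
  partition Omega [set: U] /\
  forall I : {set U}, indep I ->
    (forall w, w \in Omega -> #|w :&: I| <= 1)%N ->
    forall w, w \in Omega -> w :&: I = set0 ->
    forall x y, x \in w -> y \in w -> x != y ->
      indep (x |: I) \/ indep (y |: I).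

Definition two_sheltering (U : finType) (indep : {set U} -> Prop)
    (Omega : {set {set U}}) : Prop :=
  sheltering indep Omega /\ (forall w, w \in Omega -> #|w| = 2%N).

Definition IA_matrix (B T : finType) (A : B -> T -> 'F_2) (b : B) (x : B + T)
    : 'F_2 :=
  match x with
  | inl c => (b == c)%:R
  | inr t => A b t
  end.

Definition pair_partition (B T : finType) (f : B -> T) : {set {set (B + T)}} :=
  [set [set inl b; inr (f b)] | b : B].

From HB Require Import structures.
From mathcomp Require Import all_boot all_order all_algebra.
From Stdlib Require Import Classical.
Set Implicit Arguments. Unset Strict Implicit. Unset Printing Implicit Defensive.
Import GRing.Theory.
Local Open Scope ring_scope.

(* A vector c on B + T is a linear dependency of the columns of (Id | A)
   exactly when c (inl r) = sum_t c (inr t) A r t for every row r.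
   If A is symmetric, any two dependencies c, d therefore satisfy
     sum_r d (inr (f r)) c (inl r) = sum_r c (inr (f r)) d (inl r).
   Let I be independent, meet every pair {b, f b} at most once and avoid the
   pair of b, and let c, d be dependencies of I + b and I + f b. Every term
   of this identity vanishes except d (f b) c (b) on the left, and c (b) <> 0
   because I is independent; hence d (f b) = 0, i.e. I + f b is independent.
   Conversely, if A b (f c) = 1 and A c (f b) = 0, the set
   I = (B \ {b, c}) + f c is independent and meets every pair at most once,
   but I + b and I + f b are both dependent: the column f c vanishes in row c
   and the column f b vanishes in rows b and c. *)

Lemma addrr_F2 (x : 'F_2) : x + x = 0.
Proof. exact/addrr_pchar2/pchar_Fp. Qed.

Lemma F2_cases (x : 'F_2) : x = 0 \/ x = 1.
Proof. by case: x => [[|[|]]] // x_lt2; [left | right]; apply/val_inj. Qed.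

Lemma card_setI2_le1 (U : finType) (x y : U) (I : {set U}) : x != y ->
  (#|[set x; y] :&: I| <= 1)%N = ~~ ((x \in I) && (y \in I)).
Proof.
move=> neq_xy; apply/card_le1_eqP/idP => [all_eq | not_both].
  apply/andP=> -[xI yI]; move/eqP: neq_xy; apply; symmetry.
  by apply: all_eq; rewrite !inE eqxx ?orbT ?xI ?yI.
move=> u v; rewrite !inE => /andP[/orP[]/eqP-> uI] /andP[/orP[]/eqP-> vI] //;
  by move: not_both; rewrite uI vI.
Qed.

Lemma setI2_eq0 (U : finType) (x y : U) (I : {set U}) :
  ([set x; y] :&: I == set0) = (x \notin I) && (y \notin I).
Proof.
apply/eqP/andP => [disj | [xI yI]].
  by split; apply/negP => zI; [have := in_set0 x | have := in_set0 y];
    rewrite -disj !inE zI eqxx ?orbT.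
by apply/setP => z; rewrite !inE; case: eqP => [->|_]; case: eqP => [->|_];
  rewrite ?(negbTE xI) ?(negbTE yI) ?andbF.
Qed.

Section IAMatrix.
Variables (B T : finType) (A : B -> T -> 'F_2).

Definition IA_kernel (c : B + T -> 'F_2) : Prop :=
  forall r, c (inl r) + \sum_t c (inr t) * A r t = 0.

Lemma IA_combE (S : {set B + T}) (c : B + T -> 'F_2) r :
  (forall x, x \notin S -> c x = 0) ->
  \sum_(x in S) c x * IA_matrix A r x = c (inl r) + \sum_t c (inr t) * A r t.
Proof.
move=> c_supp; rewrite big_mkcond /=.
rewrite (eq_bigr (fun x => c x * IA_matrix A r x)); last first.
  by move=> x _; case: ifP => // /negbT /c_supp ->; rewrite mul0r.
rewrite big_sumType /=; congr (_ + _).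
rewrite (bigD1 r) //= eqxx mulr1 big1 ?addr0 // => s neq_sr.
by rewrite eq_sym (negbTE neq_sr) mulr0.
Qed.

Lemma col_indep_IAE (S : {set B + T}) :
  col_indep (IA_matrix A) S <->
  (forall c, (forall x, x \notin S -> c x = 0) -> IA_kernel c -> forall x, c x = 0).
Proof.
split=> indepS c c_supp ker; apply: indepS => // r.
  by rewrite IA_combE.
by rewrite -(IA_combE r c_supp).
Qed.

Lemma not_col_indep_IA (S : {set B + T}) : ~ col_indep (IA_matrix A) S ->
  exists2 c, (forall x, x \notin S -> c x = 0) /\ IA_kernel c & exists x, c x != 0.
Proof.
move=> depS; apply: NNPP => no_dep; apply/depS/col_indep_IAE => c c_supp ker x.
by case: (eqVneq (c x) 0) => // nz_cx; case: no_dep; exists c => //; exists x.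
Qed.

Lemma col_indep_IA_one_inr (X : {set B + T}) t r0 :
  (forall s, inr s \in X -> s = t) -> inl r0 \notin X -> A r0 t != 0 ->
  col_indep (IA_matrix A) X.
Proof.
move=> X_inr r0X nz_At; apply/col_indep_IAE => c c_supp ker.
have c_inr s : c (inr s) = (s == t)%:R * c (inr t).
  by case: eqP => [->|neq_st]; rewrite ?mul1r ?mul0r // c_supp //;
     apply: contra_notN neq_st => /X_inr.
have row_sum r : \sum_s c (inr s) * A r s = c (inr t) * A r t.
  by rewrite (bigD1 t) //= big1 ?addr0 // => s /negbTE st; rewrite c_inr st !mul0r.
have ct0 : c (inr t) = 0.
  move: (ker r0); rewrite c_supp // add0r row_sum => /eqP.
  by rewrite mulf_eq0 (negbTE nz_At) orbF => /eqP.
have c_inl r : c (inl r) = 0 by move: (ker r); rewrite row_sum ct0 mul0r addr0.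
by case=> [r | s]; rewrite ?c_inl // c_inr ct0 mulr0.
Qed.

Lemma not_col_indep_IA_inr (X : {set B + T}) t : inr t \in X ->
  (forall r, inl r \notin X -> A r t = 0) -> ~ col_indep (IA_matrix A) X.
Proof.
move=> tX A_out /col_indep_IAE indepX.
pose c x := if x is inl r then A r t else (x == inr t)%:R.
suff /eqP : c (inr t) = 0 by rewrite /c eqxx oner_eq0.
apply: indepX => [[r | s] xX | r] /=.
- exact: A_out.
- by case: eqP xX => // ->; rewrite tX.
rewrite (bigD1 t) //= eqxx mul1r big1 ?addr0 ?addrr_F2 // => s /negbTE st.
by rewrite inj_eq ?st ?mul0r //; exact: inr_inj.
Qed.

End IAMatrix.

Section Symmetric.
Variables (B T : finType) (f : B -> T) (f_bij : bijective f) (A : B -> T -> 'F_2).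
Hypothesis A_sym : forall b c : B, A b (f c) = A c (f b).

Lemma IA_kernel_inl (c : B + T -> 'F_2) r : IA_kernel A c ->
  c (inl r) = - \sum_s c (inr (f s)) * A r (f s).
Proof.
move=> /(_ r); rewrite (reindex f (onW_bij _ f_bij)) /= => ker_r.
by apply/eqP; rewrite -addr_eq0 ker_r.
Qed.

Lemma IA_kernel_pairing (c d : B + T -> 'F_2) : IA_kernel A c -> IA_kernel A d ->
  \sum_r d (inr (f r)) * c (inl r) = \sum_r c (inr (f r)) * d (inl r).
Proof.
move=> ker_c ker_d.
under eq_bigr => r _ do rewrite (IA_kernel_inl r ker_c) mulrN mulr_sumr.
under [RHS]eq_bigr => r _ do rewrite (IA_kernel_inl r ker_d) mulrN mulr_sumr.
rewrite !sumrN exchange_big /=; congr (- _); apply: eq_bigr => r _.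
by apply: eq_bigr => s _; rewrite A_sym mulrCA !mulrA.
Qed.

Lemma IA_sheltering_pair (I : {set B + T}) b :
  col_indep (IA_matrix A) I ->
  (forall r, ~~ ((inl r \in I) && (inr (f r) \in I))) ->
  inl b \notin I -> inr (f b) \notin I ->
  col_indep (IA_matrix A) (inl b |: I) \/ col_indep (IA_matrix A) (inr (f b) |: I).
Proof.
move=> indepI transI bI fbI.
have [indep_bI | /not_col_indep_IA[c [c_supp ker_c] [x nz_cx]]] :=
  classic (col_indep (IA_matrix A) (inl b |: I)); first by left.
right; have /col_indep_IAE indep_I := indepI.
have c_out y : y \notin I -> y != inl b -> c y = 0.
  by move=> yI neq_yb; apply: c_supp; rewrite !inE negb_or neq_yb.
have nz_cb : c (inl b) != 0.
  apply: contra_neq nz_cx => cb0; apply: indep_I => // y yI.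
  by case: (eqVneq y (inl b)) => [-> // | /(c_out _ yI)].
apply/col_indep_IAE => d d_supp ker_d.
have d_out y : y \notin I -> y != inr (f b) -> d y = 0.
  by move=> yI neq_yfb; apply: d_supp; rewrite !inE negb_or neq_yfb.
suff dfb : d (inr (f b)) = 0.
  by apply: indep_I => // y yI; case: (eqVneq y (inr (f b))) => [->|/(d_out _ yI)].
have := IA_kernel_pairing ker_c ker_d.
rewrite (bigD1 b) //= !big1 ?addr0 => [/eqP | r _ | r neq_rb].
- by rewrite mulf_eq0 (negbTE nz_cb) orbF => /eqP.
- case: (boolP (inl r \in I)) => rI; last by rewrite d_out ?mulr0.
  by rewrite c_out ?mul0r //; apply: contraNN (transI r) => ->; rewrite rI.
- case: (boolP (inl r \in I)) => rI.
    rewrite d_out ?mul0r //; first by apply: contraNN (transI r) => ->; rewrite rI.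
    by rewrite (inj_eq inr_inj) (inj_eq (bij_inj f_bij)).
  by rewrite c_out ?mulr0 // (inj_eq inl_inj).
Qed.

End Symmetric.

Lemma partition_pair_partition (B T : finType) (f : B -> T) :
  bijective f -> partition (pair_partition f) [set: B + T].
Proof.
move=> f_bij; have f_inj := bij_inj f_bij; have [g _ gK] := f_bij.
apply/and3P; split.
- apply/eqP/setP => x; rewrite inE; apply/bigcupP.
  have [b xb] : exists b, x \in [set inl b; inr (f b)].
    by case: x => [b | t]; [exists b | exists (g t); rewrite gK]; rewrite !inE eqxx ?orbT.
  by exists [set inl b; inr (f b)]; first exact: imset_f.
- apply/trivIsetP => _ _ /imsetP[b1 _ ->] /imsetP[b2 _ ->] neq_pairs.
  have neq_b12 : b1 != b2 by apply: contraNneq neq_pairs => ->.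
  rewrite -setI_eq0 setI2_eq0 !inE !negb_or.
  by rewrite (inj_eq inl_inj) (inj_eq inr_inj) (inj_eq f_inj) neq_b12.
- by apply/negP => /imsetP[b _ /setP/(_ (inl b))]; rewrite !inE eqxx.
Qed.

Section Asymmetric.
Variables (B T : finType) (f : B -> T) (f_inj : injective f) (A : B -> T -> 'F_2).
Hypothesis A_diag : forall b : B, A b (f b) = 0.

Lemma IA_not_sheltering_asym b c : A b (f c) = 1 -> A c (f b) = 0 ->
  ~ sheltering (col_indep (IA_matrix A)) (pair_partition f).
Proof.
move=> Abc1 Acb0 [_ shelter].
have neq_bc : b != c by apply: contra_eq_neq Abc1 => ->; rewrite A_diag.
pose I := [set x | if x is inl r then r \notin [set b; c] else x == inr (f c)].
have inlI r : (inl r \in I) = (r \notin [set b; c]) by rewrite inE.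
have inrI t : (inr t \in I) = (t == f c) by rewrite inE inj_eq //; exact: inr_inj.
have pair_b : [set inl b; inr (f b)] \in pair_partition f by apply: imset_f.
have indepI : col_indep (IA_matrix A) I.
  apply: (@col_indep_IA_one_inr _ _ _ _ (f c) b).
  - by move=> s; rewrite inrI => /eqP.
  - by rewrite inlI !inE eqxx.
  - by rewrite Abc1 oner_neq0.
have meetI w : w \in pair_partition f -> (#|w :&: I| <= 1)%N.
  case/imsetP=> r _ ->; rewrite card_setI2_le1 // inlI inrI (inj_eq f_inj).
  by apply/nandP; case: eqP => [->|]; [left; rewrite !inE eqxx orbT | right].
have disjI : [set inl b; inr (f b)] :&: I = set0.
  by apply/eqP; rewrite setI2_eq0 inlI inrI (inj_eq f_inj) !inE eqxx neq_bc.
have [] := shelter I indepI meetI _ pair_b disjI (inl b) (inr (f b));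
  rewrite ?inE ?eqxx ?orbT //.
- apply: not_col_indep_IA_inr (f c) _ _; first by rewrite in_setU1 inrI eqxx orbT.
  move=> r; rewrite in_setU1 inlI (inj_eq inl_inj) !inE negb_or negbK.
  case/andP=> neq_rb /orP[]/eqP r_eq; first by rewrite r_eq eqxx in neq_rb.
  by rewrite r_eq A_diag.
- apply: not_col_indep_IA_inr (f b) _ _; first exact: setU11.
  move=> r; rewrite in_setU1 inlI !inE negb_or negbK => /andP[_ /orP[]/eqP->].
  + exact: A_diag.
  + exact: Acb0.
Qed.

End Asymmetric.

Theorem lemma2p6 (B T : finType) (f : B -> T) (Hf : bijective f)
    (A : B -> T -> 'F_2) (Hdiag : forall b : B, A b (f b) = 0) :
  two_sheltering (col_indep (IA_matrix A)) (pair_partition f) <->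
  (forall b c : B, A b (f c) = A c (f b)).
Proof.
split=> [[shelter _] b c | A_sym].
  have [Abc|Abc] := F2_cases (A b (f c)); have [Acb|Acb] := F2_cases (A c (f b));
    rewrite Abc Acb //; exfalso.
  - exact: (IA_not_sheltering_asym (bij_inj Hf) Hdiag Acb Abc shelter).
  - exact: (IA_not_sheltering_asym (bij_inj Hf) Hdiag Abc Acb shelter).
split; last by move=> _ /imsetP[b _ ->]; rewrite cards2.
split=> [|I indepI meet_le1 _ /imsetP[b _ ->] /eqP disj x y].
  exact: partition_pair_partition.
have transI r : ~~ ((inl r \in I) && (inr (f r) \in I)).
  by rewrite -card_setI2_le1 //; apply/meet_le1/imset_f.
move: disj; rewrite setI2_eq0 => /andP[bI fbI].
have := IA_sheltering_pair Hf A_sym indepI transI bI fbI.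
move=> + /set2P[->|->] /set2P[->|->]; rewrite ?eqxx // => + _.
by case; [right | left].
Qed.
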